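(* Let $K$ be a field. Let $(L,M,N,P,h,\lambda,\lambda',\mu,\nu)$ be a Hopf crossed square of cocommutative Hopf algebras over $K$. Define $M\otimes L\to L$ by $m\otimes l\mapsto \mu(m)\triangleright l$ and $N\otimes L\to L$ by $n\otimes l\mapsto \nu(n)\triangleright l$. Then with these actions (and the given $P$-actions on $L,M,N$ and the given $h$), $(L,M,N,P,h)$ is a Hopf $2$-action; moreover every morphism of Hopf crossed squares is a morphism of the corresponding Hopf $2$-actions. Hence the category $\mathsf{X}^2(\mathsf{Hopf}_{K,coc})$ of Hopf crossed squares is a subcategory of the category $\mathsf{Act}^2(\mathsf{Hopf}_{K,coc})$ of Hopf $2$-actions.
   Context: All Hopf algebras are cocommutative over $K$; Sweedler notation $\Delta(x)=x_1\otimes x_2$, antipode $S$, counit $\epsilon$. For a cocommutative Hopf algebra $B$, a $B$-module Hopf algebra is a Hopf algebra $X$ with a linear map $B\otimes X\to X$, $b\otimes x\mapsto b\triangleright x$, satisfying $(bb')\triangleright x=b\triangleright(b'\triangleright x)$, $1_B\triangleright x=x$, $b\triangleright(xy)=(b_1\triangleright x)(b_2\triangleright y)$, $b\triangleright 1_X=\epsilon(b)1_X$, $\Delta(b\triangleright x)=b_1\triangleright x_1\otimes b_2\triangleright x_2$, $\epsilon(b\triangleright x)=\epsilon(b)\epsilon(x)$. A Hopf crossed module $(B,X,d)$ is a $B$-module Hopf algebra $X$ with a Hopf algebra morphism $d\colon X\to B$ such that $d(b\triangleright x)=b_1d(x)S(b_2)$ and $d(y)\triangleright x=y_1xS(y_2)$.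 A Hopf crossed square $(L,M,N,P,h,\lambda,\lambda',\mu,\nu)$ is a commutative square of Hopf algebra morphisms $\lambda\colon L\to M$, $\lambda'\colon L\to N$, $\mu\colon M\to P$, $\nu\colon N\to P$ ($\mu\lambda=\nu\lambda'$), where $L,M,N$ are $P$-module Hopf algebras and $h\colon M\otimes N\to L$ is a coalgebra map such that for all $l\in L$, $m,m'\in M$, $n,n'\in N$, $p\in P$: (CS1) $(P,M,\mu)$, $(P,N,\nu)$, $(P,L,\mu\lambda)$ are Hopf crossed modules; (CS2) $\lambda,\lambda'$ are $P$-linear; (CS3) $h$ is $P$-linear, i.e. $h(p_1\triangleright m\otimes p_2\triangleright n)=p\triangleright h(m\otimes n)$; (CS4) $\lambda h(m\otimes n)=m_1(\nu(n)\triangleright S(m_2))$ and $\lambda' h(m\otimes n)=(\mu(m)\triangleright n_1)S(n_2)$; (CS5) $h(\lambda(l)\otimes n)=l_1(\nu(n)\triangleright S(l_2))$ and $h(m\otimes\lambda'(l))=(\mu(m)\triangleright l_1)S(l_2)$; (CS6) $h(m\otimes nn')=h(m_1\otimes n_1)(\nu(n_2)\triangleright h(m_2\otimes n'))$ and $h(mm'\otimes n)=(\mu(m_1)\triangleright h(m'\otimes n_1))h(m_2\otimes n_2)$. A morphism of Hopf crossed squares is a quadruple of Hopf algebra morphisms $\alpha\colon L\to\hat L$, $\beta\colon M\to\hat M$, $\gamma\colon N\to\hat N$, $\delta\colon P\to\hat P$ commuting with $\lambda,\lambda',\mu,\nu$ and their hatted versions, with $\alpha(p\triangleright l)=\delta(p)\triangleright\alpha(l)$,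 $\beta(p\triangleright m)=\delta(p)\triangleright\beta(m)$, $\gamma(p\triangleright n)=\delta(p)\triangleright\gamma(n)$, and $\alpha h=\hat h(\beta\otimes\gamma)$. A Hopf $2$-action $(L,M,N,P,h)$ consists of cocommutative Hopf algebras $L,M,N,P$ such that $L,M,N$ are $P$-module Hopf algebras, $L$ is an $M$-module Hopf algebra and an $N$-module Hopf algebra, and a coalgebra morphism $h\colon M\otimes N\to L$, such that for all $m,m'\in M$, $n,n'\in N$, $l\in L$, $p\in P$: (2A1) $(p_1\triangleright m)\triangleright(p_2\triangleright l)=p\triangleright(m\triangleright l)$ and $(p_1\triangleright n)\triangleright(p_2\triangleright l)=p\triangleright(n\triangleright l)$; (2A2) $h$ is $P$-linear; (2A3) $h(1_M\otimes n)=\epsilon(n)1_L$, $h(m\otimes 1_N)=\epsilon(m)1_L$; (2A4) $h(m\otimes nn')=h(m_1\otimes n_1)(n_2\triangleright h(m_2\otimes n'))$ and $h(mm'\otimes n)=(m_1\triangleright h(m'\otimes n_1))h(m_2\otimes n_2)$; (2A5) $(m_1\triangleright(n_1\triangleright l))h(m_2\otimes n_2)=h(m_1\otimes n_1)(n_2\triangleright(m_2\triangleright l))$. A morphism of Hopf $2$-actions $(L,M,N,P,h)\to(L',M',N',P',h')$ is a quadruple of Hopf algebra morphisms $\alpha\colon L\to L'$, $\beta\colon M\to M'$, $\gamma\colon N\to N'$, $\delta\colon P\to P'$ with $\alpha(p\triangleright l)=\delta(p)\triangleright\alpha(l)$, $\alpha(m\triangleright l)=\beta(m)\triangleright\alpha(l)$,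 $\alpha(n\triangleright l)=\gamma(n)\triangleright\alpha(l)$, $\beta(p\triangleright m)=\delta(p)\triangleright\beta(m)$, $\gamma(p\triangleright n)=\delta(p)\triangleright\gamma(n)$, and $\alpha h=h'(\beta\otimes\gamma)$. *)

(* Cocommutative Hopf algebras over a field K, with
   tensors represented as finite sums of pure tensors (lists of pairs),
   and equality of tensors defined via the universal property of the
   tensor product (agreement under every K-bilinear map). *)
From HB Require Import structures.
From mathcomp Require Import all_boot all_algebra.
Set Implicit Arguments. Unset Strict Implicit. Unset Printing Implicit Defensive.
Import GRing.Theory.
Local Open Scope ring_scope.

Section Hopf.
Variable K : fieldType.

Definition tsum (X Y : Type) (W : nmodType) (f : X -> Y -> W) (t : seq (X * Y)) : W :=
  \sum_(p <- t) f p.1 p.2.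

Definition lin_map (X W : lmodType K) (f : X -> W) : Prop :=
  forall (a : K) (x y : X), f (a *: x + y) = a *: f x + f y.

Definition bilin_map (X Y W : lmodType K) (f : X -> Y -> W) : Prop :=
  (forall y, lin_map (fun x => f x y)) /\ (forall x, lin_map (f x)).

Definition trilin_map (X Y Z W : lmodType K) (f : X -> Y -> Z -> W) : Prop :=
  [/\ (forall y z, lin_map (fun x => f x y z)),
      (forall x z, lin_map (fun y => f x y z)) &
      (forall x y, lin_map (f x y))].

(* t = t' as elements of X (x) Y (universal property of the tensor product) *)
Definition teq (X Y : lmodType K) (t t' : seq (X * Y)) : Prop :=
  forall (W : lmodType K) (f : X -> Y -> W), bilin_map f -> tsum f t = tsum f t'.

Record cocHopf_axioms (H : algType K) (D : H -> seq (H * H)) (e : H -> K)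
    (S : H -> H) : Prop := {
  ax_D_lin : forall (a : K) (x y : H),
    teq (D (a *: x + y)) ([seq (a *: p.1, p.2) | p <- D x] ++ D y);
  ax_coassoc : forall (x : H) (W : lmodType K) (f : H -> H -> H -> W),
    trilin_map f ->
    tsum (fun u v => tsum (fun u1 u2 => f u1 u2 v) (D u)) (D x) =
    tsum (fun u v => tsum (fun v1 v2 => f u v1 v2) (D v)) (D x);
  ax_counit : forall x : H,
    tsum (fun u v => e u *: v) (D x) = x /\ tsum (fun u v => e v *: u) (D x) = x;
  ax_eps_lin : forall (a : K) (x y : H), e (a *: x + y) = a * e x + e y;
  ax_D_one : teq (D 1) [:: (1, 1)];
  ax_D_mul : forall x y : H,
    teq (D (x * y)) [seq (p.1 * q.1, p.2 * q.2) | p <- D x, q <- D y];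
  ax_eps_one : e 1 = 1;
  ax_eps_mul : forall x y : H, e (x * y) = e x * e y;
  ax_S_lin : lin_map S;
  ax_antipode : forall x : H,
    tsum (fun u v => S u * v) (D x) = e x *: 1 /\
    tsum (fun u v => u * S v) (D x) = e x *: 1;
  ax_cocomm : forall x : H, teq (D x) [seq (p.2, p.1) | p <- D x]
}.

Record cocHopf := CocHopf {
  hcar :> algType K;
  hD : hcar -> seq (hcar * hcar);
  heps : hcar -> K;
  hS : hcar -> hcar;
  hax : cocHopf_axioms hD heps hS
}.

Definition hopf_morph (H H' : cocHopf) (f : H -> H') : Prop :=
  [/\ lin_map f, f 1 = 1, (forall x y, f (x * y) = f x * f y),
      (forall x, teq (hD (f x)) [seq (f p.1, f p.2) | p <- hD x]) &
      (forall x, heps (f x) = heps x)].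

Definition module_hopf (B X : cocHopf) (act : B -> X -> X) : Prop :=
  [/\ bilin_map act,
      (forall b b' x, act (b * b') x = act b (act b' x)) /\ (forall x, act 1 x = x),
      (forall b x y, act b (x * y) = tsum (fun b1 b2 => act b1 x * act b2 y) (hD b))
        /\ (forall b, act b 1 = heps b *: 1),
      (forall b x, teq (hD (act b x))
                       [seq (act p.1 q.1, act p.2 q.2) | p <- hD b, q <- hD x]) &
      (forall b x, heps (act b x) = heps b * heps x)].

Definition crossed_module (B X : cocHopf) (act : B -> X -> X) (d : X -> B) : Prop :=
  [/\ module_hopf act, hopf_morph d,
      (forall b x, d (act b x) = tsum (fun b1 b2 => b1 * d x * hS b2) (hD b)) &
      (forall y x, act (d y) x = tsum (fun y1 y2 => y1 * x * hS y2) (hD y))].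

(* coalgebra map M (x) N -> L, given as a bilinear map *)
Definition coalg_map2 (M N L : cocHopf) (h : M -> N -> L) : Prop :=
  [/\ bilin_map h,
      (forall m n, teq (hD (h m n))
                       [seq (h p.1 q.1, h p.2 q.2) | p <- hD m, q <- hD n]) &
      (forall m n, heps (h m n) = heps m * heps n)].

Record is_crossed_square (L M N P : cocHopf)
    (aL : P -> L -> L) (aM : P -> M -> M) (aN : P -> N -> N) (h : M -> N -> L)
    (lam : L -> M) (lam' : L -> N) (mu : M -> P) (nu : N -> P) : Prop := {
  cs_lam : hopf_morph lam;
  cs_lam' : hopf_morph lam';
  cs_mu : hopf_morph mu;
  cs_nu : hopf_morph nu;
  cs_comm : forall l, mu (lam l) = nu (lam' l);
  cs_h : coalg_map2 h;
  cs1_M : crossed_module aM mu;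
  cs1_N : crossed_module aN nu;
  cs1_L : crossed_module aL (fun l => mu (lam l));
  cs2 : (forall p l, lam (aL p l) = aM p (lam l)) /\
        (forall p l, lam' (aL p l) = aN p (lam' l));
  cs3 : forall p m n, tsum (fun p1 p2 => h (aM p1 m) (aN p2 n)) (hD p) = aL p (h m n);
  cs4 : (forall m n, lam (h m n) = tsum (fun m1 m2 => m1 * aM (nu n) (hS m2)) (hD m)) /\
        (forall m n, lam' (h m n) = tsum (fun n1 n2 => aN (mu m) n1 * hS n2) (hD n));
  cs5 : (forall l n, h (lam l) n = tsum (fun l1 l2 => l1 * aL (nu n) (hS l2)) (hD l)) /\
        (forall m l, h m (lam' l) = tsum (fun l1 l2 => aL (mu m) l1 * hS l2) (hD l));
  cs6 : (forall m n n', h m (n * n') =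
           tsum (fun m1 m2 => tsum (fun n1 n2 =>
                   h m1 n1 * aL (nu n2) (h m2 n')) (hD n)) (hD m)) /\
        (forall m m' n, h (m * m') n =
           tsum (fun m1 m2 => tsum (fun n1 n2 =>
                   aL (mu m1) (h m' n1) * h m2 n2) (hD n)) (hD m))
}.

Record xsquare := XSquare {
  sL : cocHopf; sM : cocHopf; sN : cocHopf; sP : cocHopf;
  sactL : sP -> sL -> sL; sactM : sP -> sM -> sM; sactN : sP -> sN -> sN;
  sh : sM -> sN -> sL;
  slam : sL -> sM; slam' : sL -> sN; smu : sM -> sP; snu : sN -> sP;
  sax : is_crossed_square sactL sactM sactN sh slam slam' smu snu
}.

Record xsq_morph (X Y : xsquare) (alpha : sL X -> sL Y) (beta : sM X -> sM Y)
    (gamma : sN X -> sN Y) (delta : sP X -> sP Y) : Prop := {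
  xm_alpha : hopf_morph alpha;
  xm_beta : hopf_morph beta;
  xm_gamma : hopf_morph gamma;
  xm_delta : hopf_morph delta;
  xm_lam : forall l, beta (@slam X l) = @slam Y (alpha l);
  xm_lam' : forall l, gamma (@slam' X l) = @slam' Y (alpha l);
  xm_mu : forall m, delta (@smu X m) = @smu Y (beta m);
  xm_nu : forall n, delta (@snu X n) = @snu Y (gamma n);
  xm_actL : forall p l, alpha (@sactL X p l) = @sactL Y (delta p) (alpha l);
  xm_actM : forall p m, beta (@sactM X p m) = @sactM Y (delta p) (beta m);
  xm_actN : forall p n, gamma (@sactN X p n) = @sactN Y (delta p) (gamma n);
  xm_h : forall m n, alpha (@sh X m n) = @sh Y (beta m) (gamma n)
}.

Record is_2action (L M N P : cocHopf)
    (aL : P -> L -> L) (aM : P -> M -> M) (aN : P -> N -> N)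
    (aML : M -> L -> L) (aNL : N -> L -> L) (h : M -> N -> L) : Prop := {
  a_L : module_hopf aL;
  a_M : module_hopf aM;
  a_N : module_hopf aN;
  a_ML : module_hopf aML;
  a_NL : module_hopf aNL;
  a_h : coalg_map2 h;
  a1 : (forall p m l, tsum (fun p1 p2 => aML (aM p1 m) (aL p2 l)) (hD p) = aL p (aML m l)) /\
       (forall p n l, tsum (fun p1 p2 => aNL (aN p1 n) (aL p2 l)) (hD p) = aL p (aNL n l));
  a2 : forall p m n, tsum (fun p1 p2 => h (aM p1 m) (aN p2 n)) (hD p) = aL p (h m n);
  a3 : (forall n, h 1 n = heps n *: 1) /\ (forall m, h m 1 = heps m *: 1);
  a4 : (forall m n n', h m (n * n') =
          tsum (fun m1 m2 => tsum (fun n1 n2 =>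
                  h m1 n1 * aNL n2 (h m2 n')) (hD n)) (hD m)) /\
       (forall m m' n, h (m * m') n =
          tsum (fun m1 m2 => tsum (fun n1 n2 =>
                  aML m1 (h m' n1) * h m2 n2) (hD n)) (hD m));
  a5 : forall m n l,
       tsum (fun m1 m2 => tsum (fun n1 n2 => aML m1 (aNL n1 l) * h m2 n2) (hD n)) (hD m) =
       tsum (fun m1 m2 => tsum (fun n1 n2 => h m1 n1 * aNL n2 (aML m2 l)) (hD n)) (hD m)
}.

Record act2_morph (L M N P L' M' N' P' : cocHopf)
    (aL : P -> L -> L) (aM : P -> M -> M) (aN : P -> N -> N)
    (aML : M -> L -> L) (aNL : N -> L -> L) (h : M -> N -> L)
    (aL' : P' -> L' -> L') (aM' : P' -> M' -> M') (aN' : P' -> N' -> N')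
    (aML' : M' -> L' -> L') (aNL' : N' -> L' -> L') (h' : M' -> N' -> L')
    (alpha : L -> L') (beta : M -> M') (gamma : N -> N') (delta : P -> P') : Prop := {
  am_alpha : hopf_morph alpha;
  am_beta : hopf_morph beta;
  am_gamma : hopf_morph gamma;
  am_delta : hopf_morph delta;
  am_PL : forall p l, alpha (aL p l) = aL' (delta p) (alpha l);
  am_ML : forall m l, alpha (aML m l) = aML' (beta m) (alpha l);
  am_NL : forall n l, alpha (aNL n l) = aNL' (gamma n) (alpha l);
  am_PM : forall p m, beta (aM p m) = aM' (delta p) (beta m);
  am_PN : forall p n, gamma (aN p n) = aN' (delta p) (gamma n);
  am_h : forall m n, alpha (h m n) = h' (beta m) (gamma n)
}.

End Hopf.

Arguments sactL {K} _ _ _.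
Arguments sactM {K} _ _ _.
Arguments sactN {K} _ _ _.
Arguments sh {K} _ _ _.
Arguments slam {K} _ _.
Arguments slam' {K} _ _.
Arguments smu {K} _ _.
Arguments snu {K} _ _.

From HB Require Import structures.
From mathcomp Require Import all_boot all_algebra.

Set Implicit Arguments.
Unset Strict Implicit.
Unset Printing Implicit Defensive.

Import GRing.Theory.
Local Open Scope ring_scope.

(* The axioms of a Hopf 2-action other than (2A1), (2A3) and (2A5) are axioms
   of the crossed square, and the actions of M and N on L, being pulled back
   along the Hopf morphisms mu and nu, are again module Hopf algebras.
   (2A1) follows from the equivariance  sum mu(p1 > m) p2 = p mu(m)  of the
   crossed module (P, M, mu), and (2A3) is (CS5) at l = 1.  For (2A5), the
   Peiffer identity of (P, L, mu lam) moves h(m1, n1) to the right of the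
   action, turning the right-hand side into
     sum (mu lam h(m1, n1) nu(n2) mu(m2)) > l * h(m3, n3);
   by (CS4) and the equivariance of (P, M, mu), the acting element is the Hopf
   analogue of the commutator identity  mu lam h(m, n) nu(n) mu(m) = mu(m) nu(n),
   which collapses it to mu(m) nu(n).  Morphisms of crossed squares commute
   with mu and nu, hence preserve the induced actions. *)

Section SweedlerSums.

Variables (X Y : Type) (W : nmodType).

Lemma eq_tsum (f g : X -> Y -> W) t :
  (forall a b, f a b = g a b) -> tsum f t = tsum g t.
Proof. by move=> fg; apply: eq_bigr => p _; rewrite fg. Qed.

Lemma tsumD (f g : X -> Y -> W) t :
  tsum (fun a b => f a b + g a b) t = tsum f t + tsum g t.
Proof. exact: big_split. Qed.

Lemma exchange_tsum (X' Y' : Type) (F : X -> Y -> X' -> Y' -> W) t t' :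
  tsum (fun a b => tsum (F a b) t') t = tsum (fun c d => tsum (fun a b => F a b c d) t) t'.
Proof. exact: exchange_big. Qed.

Lemma tsum_map (A B : Type) (F : A * B -> X * Y) (f : X -> Y -> W) t :
  tsum f (map F t) = \sum_(p <- t) f (F p).1 (F p).2.
Proof. exact: big_map. Qed.

Lemma tsum_allpairs (A B C D : Type) (F : A * B -> C * D -> X * Y) (f : X -> Y -> W) s t :
  tsum f [seq F p q | p <- s, q <- t] = \sum_(p <- s) \sum_(q <- t) f (F p q).1 (F p q).2.
Proof. exact: big_allpairs_dep. Qed.

End SweedlerSums.

Lemma tsumZ (R : pzRingType) (V : lmodType R) (X Y : Type) k (f : X -> Y -> V) t :
  tsum (fun a b => k *: f a b) t = k *: tsum f t.
Proof. by rewrite /tsum scaler_sumr. Qed.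

Section LinearMaps.

Variable K : fieldType.

Section Properties.

Variables (X W : lmodType K) (f : X -> W).
Hypothesis f_lin : lin_map f.

Lemma lin_map0 : f 0 = 0.
Proof.
have := f_lin 1 0 0; rewrite !scale1r addr0 => /(congr1 (fun v => v - f 0)).
by rewrite addrK subrr.
Qed.

Lemma lin_mapD x y : f (x + y) = f x + f y.
Proof. by have := f_lin 1 x y; rewrite !scale1r. Qed.

Lemma lin_mapZ a x : f (a *: x) = a *: f x.
Proof. by have := f_lin a x 0; rewrite !addr0 lin_map0 addr0. Qed.

Lemma lin_map_tsum A B (g : A -> B -> X) t : f (tsum g t) = tsum (fun a b => f (g a b)) t.
Proof. exact: (big_morph f lin_mapD lin_map0). Qed.

End Properties.

Lemma lin_map_id (X : lmodType K) : lin_map (fun x : X => x).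
Proof. by []. Qed.

Lemma lin_map_comp (X Y W : lmodType K) (g : Y -> W) (f : X -> Y) :
  lin_map g -> lin_map f -> lin_map (fun x => g (f x)).
Proof. by move=> g_lin f_lin a x y; rewrite f_lin g_lin. Qed.

Lemma lin_map_tsumr (X W : lmodType K) A B (G : X -> A -> B -> W) t :
  (forall a b, lin_map (fun x => G x a b)) -> lin_map (fun x => tsum (G x) t).
Proof.
move=> G_lin k x y; rewrite -tsumZ -tsumD; apply: eq_tsum => a b.
by rewrite (G_lin a b).
Qed.

Lemma lin_map_mulr (A : algType K) (c : A) : lin_map (fun x : A => x * c).
Proof. by move=> a x y; rewrite mulrDl scalerAl. Qed.

Lemma lin_map_mull (A : algType K) (c : A) : lin_map (fun x : A => c * x).
Proof. by move=> a x y; rewrite mulrDr scalerAr. Qed.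

End LinearMaps.

Section CocHopfAlgebra.

Variables (K : fieldType) (H : cocHopf K).

Lemma hS_lin : lin_map (@hS K H).
Proof. exact: ax_S_lin (hax H). Qed.

Lemma hD_coassoc (W : lmodType K) (f : H -> H -> H -> W) x : trilin_map f ->
  tsum (fun u v => tsum (fun u1 u2 => f u1 u2 v) (hD u)) (hD x) =
  tsum (fun u v => tsum (fun v1 v2 => f u v1 v2) (hD v)) (hD x).
Proof. exact: ax_coassoc (hax H) x W f. Qed.

Lemma hD_cocomm (W : lmodType K) (f : H -> H -> W) x : bilin_map f ->
  tsum f (hD x) = tsum (fun u v => f v u) (hD x).
Proof. by move=> f_lin; rewrite (ax_cocomm (hax H) x f_lin) tsum_map. Qed.

Lemma hD_counitr (W : lmodType K) (G : H -> W) x : lin_map G ->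
  tsum (fun u v => heps v *: G u) (hD x) = G x.
Proof.
move=> G_lin; rewrite -{2}(proj2 (ax_counit (hax H) x)) (lin_map_tsum G_lin).
by apply: eq_tsum => u v; rewrite (lin_mapZ G_lin).
Qed.

Lemma hD_antipodel (W : lmodType K) (G : H -> W) x : lin_map G ->
  tsum (fun u v => G (hS u * v)) (hD x) = heps x *: G 1.
Proof.
move=> G_lin.
by rewrite -(lin_map_tsum G_lin) (proj1 (ax_antipode (hax H) x)) (lin_mapZ G_lin).
Qed.

Lemma hD1 (W : lmodType K) (f : H -> H -> W) : bilin_map f -> tsum f (hD 1) = f 1 1.
Proof. by move=> f_lin; rewrite (ax_D_one (hax H) f_lin) /tsum big_seq1. Qed.

Lemma hS1 : @hS K H 1 = 1.
Proof.
have mulS_lin : bilin_map (fun u v : H => hS u * v).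
  by split=> [v|u]; [apply: lin_map_comp (lin_map_mulr v) hS_lin | apply: lin_map_mull].
have := proj1 (ax_antipode (hax H) 1).
by rewrite (hD1 mulS_lin) mulr1 (ax_eps_one (hax H)) scale1r.
Qed.

End CocHopfAlgebra.

Ltac linearity_step := first
  [ exact: lin_map_id | exact: hS_lin | apply: lin_map_tsumr => ? ?
  | apply: (lin_map_comp (lin_map_mulr _)) | apply: (lin_map_comp (lin_map_mull _))
  | apply: (lin_map_comp (hS_lin _))
  | match goal with
    | H : forall _, lin_map _ |- _ => apply: (lin_map_comp (H _))
    | H : lin_map _ |- _ => apply: (lin_map_comp H)
    end ].
Ltac linearity := repeat linearity_step.

Section CocHopfAlgebraSums.

Variables (K : fieldType) (H : cocHopf K).

Lemma hD_swap23 (W : lmodType K) (f : H -> H -> H -> W) x : trilin_map f ->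
  tsum (fun u v => tsum (fun u1 u2 => f u1 u2 v) (hD u)) (hD x) =
  tsum (fun u v => tsum (fun u1 u2 => f u1 v u2) (hD u)) (hD x).
Proof.
case=> f_lin1 f_lin2 f_lin3; rewrite hD_coassoc; last by split.
rewrite [RHS](hD_coassoc (f := fun a b c => f a c b)); last by split.
by apply: eq_tsum => u v; apply: hD_cocomm; split.
Qed.

Lemma hD_conj_mulr_morph (A : algType K) (phi : H -> A) (z : A) x :
  lin_map phi -> phi 1 = 1 -> {morph phi : a b / a * b} ->
  tsum (fun x1 x2 => tsum (fun y1 y2 => phi y1 * z * phi (hS y2)) (hD x1) * phi x2) (hD x)
  = phi x * z.
Proof.
move=> phi_lin phi1 phiM.
transitivity (tsum (fun u v =>
    tsum (fun u1 u2 => phi u1 * z * phi (hS u2) * phi v) (hD u)) (hD x)).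
  by apply: eq_tsum => u v; rewrite (lin_map_tsum (lin_map_mulr _)).
rewrite (hD_coassoc (f := fun u1 u2 v => phi u1 * z * phi (hS u2) * phi v));
  last by split=> *; linearity.
transitivity (tsum (fun u v => heps v *: (phi u * z * phi 1)) (hD x)).
  apply: eq_tsum => u v.
  rewrite -(hD_antipodel (G := fun w => phi u * z * phi w)); last by linearity.
  by apply: eq_tsum => a b; rewrite phiM mulrA.
by rewrite (hD_counitr (G := fun w => phi w * z * phi 1)) ?phi1 ?mulr1 //; linearity.
Qed.

Lemma hD_conj_mulr (z x : H) :
  tsum (fun x1 x2 => tsum (fun y1 y2 => y1 * z * hS y2) (hD x1) * x2) (hD x) = x * z.
Proof. exact: (hD_conj_mulr_morph z x (@lin_map_id _ H) erefl (fun _ _ => erefl)). Qed.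

End CocHopfAlgebraSums.

Section HopfMorphisms.

Variables (K : fieldType) (H H' : cocHopf K) (d : H -> H').
Hypothesis d_morph : hopf_morph d.

Lemma hopf_morph_lin : lin_map d. Proof. by case: d_morph. Qed.
Lemma hopf_morph1 : d 1 = 1. Proof. by case: d_morph. Qed.
Lemma hopf_morphM : {morph d : x y / x * y}. Proof. by case: d_morph. Qed.
Lemma hopf_morph_eps x : heps (d x) = heps x. Proof. by case: d_morph. Qed.

Lemma hopf_morph_hD (W : lmodType K) (f : H' -> H' -> W) x : bilin_map f ->
  tsum f (hD (d x)) = tsum (fun a b => f (d a) (d b)) (hD x).
Proof.
by case: d_morph => _ _ _ d_hD _ f_lin; rewrite (d_hD x _ _ f_lin) tsum_map.
Qed.

End HopfMorphisms.

Lemma coalg_map2_hD (K : fieldType) (M N L : cocHopf K) (h : M -> N -> L)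
    (W : lmodType K) (f : L -> L -> W) m n :
  coalg_map2 h -> bilin_map f ->
  tsum f (hD (h m n)) =
  tsum (fun m1 m2 => tsum (fun n1 n2 => f (h m1 n1) (h m2 n2)) (hD n)) (hD m).
Proof. by case=> _ h_hD _ f_lin; rewrite (h_hD m n _ _ f_lin) tsum_allpairs. Qed.

Section ModuleHopfAlgebras.

Variables (K : fieldType) (B X : cocHopf K) (act : B -> X -> X).
Hypothesis act_module : module_hopf act.

Lemma act_linl x : lin_map (fun b => act b x). Proof. by case: act_module => [[]]. Qed.
Lemma act_linr b : lin_map (act b). Proof. by case: act_module => [[]]. Qed.
Lemma actA b b' x : act (b * b') x = act b (act b' x). Proof. by case: act_module => _ []. Qed.
Lemma act1 x : act 1 x = x. Proof. by case: act_module => _ []. Qed.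

Lemma act_mul b x y : act b (x * y) = tsum (fun b1 b2 => act b1 x * act b2 y) (hD b).
Proof. by case: act_module => _ _ []. Qed.

Lemma act_unit b : act b 1 = heps b *: 1. Proof. by case: act_module => _ _ []. Qed.

Lemma act_hD b x :
  teq (hD (act b x)) [seq (act p.1 q.1, act p.2 q.2) | p <- hD b, q <- hD x].
Proof. by case: act_module. Qed.

Lemma act_eps b x : heps (act b x) = heps b * heps x. Proof. by case: act_module. Qed.

Lemma module_hopf_pullback (B' : cocHopf K) (d : B' -> B) :
  hopf_morph d -> module_hopf (fun b x => act (d b) x).
Proof.
move=> d_morph; have d_lin := hopf_morph_lin d_morph.
have actl_lin := act_linl; have actr_lin := act_linr.
split.
- by split=> [x|b]; linearity.
- by split=> [b b' x|x]; rewrite ?hopf_morphM ?hopf_morph1 ?actA ?act1.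
- split=> [b x y|b]; last by rewrite act_unit hopf_morph_eps.
  by rewrite act_mul (hopf_morph_hD d_morph) //; split=> *; linearity.
- move=> b x W f f_lin; have [f_lin1 f_lin2] := f_lin.
  rewrite (act_hD (d b) x f_lin) !tsum_allpairs.
  apply: (@hopf_morph_hD _ _ _ _ d_morph _ (fun p1 p2 =>
    tsum (fun q1 q2 => f (act p1 q1) (act p2 q2)) (hD x))).
  by split=> *; linearity.
- by move=> b x; rewrite act_eps hopf_morph_eps.
Qed.

End ModuleHopfAlgebras.

Section CrossedModules.

Variables (K : fieldType) (B X : cocHopf K) (act : B -> X -> X) (d : X -> B).
Hypothesis cm : crossed_module act d.

Lemma peiffer_mulr x y : tsum (fun x1 x2 => act (d x1) y * x2) (hD x) = x * y.
Proof.
case: cm => _ _ _ peiffer; rewrite -hD_conj_mulr.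
by apply: eq_tsum => x1 x2; rewrite peiffer.
Qed.

Lemma equivariance_mulr b x : tsum (fun b1 b2 => d (act b1 x) * b2) (hD b) = b * d x.
Proof.
case: cm => _ _ equivariance _; rewrite -hD_conj_mulr.
by apply: eq_tsum => b1 b2; rewrite equivariance.
Qed.

Lemma pullback_act_equivariant (L : cocHopf K) (actL : B -> L -> L) b x l :
  module_hopf actL ->
  tsum (fun b1 b2 => actL (d (act b1 x)) (actL b2 l)) (hD b) = actL b (actL (d x) l).
Proof.
move=> actL_module; rewrite -actA // -equivariance_mulr.
rewrite (lin_map_tsum (act_linl actL_module l)).
by apply: eq_tsum => b1 b2; rewrite actA.
Qed.

End CrossedModules.

Section CrossedSquares.

Variables (K : fieldType) (L M N P : cocHopf K)
  (aL : P -> L -> L) (aM : P -> M -> M) (aN : P -> N -> N) (h : M -> N -> L)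
  (lam : L -> M) (lam' : L -> N) (mu : M -> P) (nu : N -> P).
Hypothesis sq : is_crossed_square aL aM aN h lam lam' mu nu.

Let mu_morph := cs_mu sq.
Let nu_morph := cs_nu sq.
Let aL_module : module_hopf aL. Proof. by case: (cs1_L sq). Qed.
Let aM_module : module_hopf aM. Proof. by case: (cs1_M sq). Qed.
(* The linearity facts below are used implicitly by [linearity]. *)
Let mu_lin := hopf_morph_lin mu_morph.
Let nu_lin := hopf_morph_lin nu_morph.
Let lam_lin := hopf_morph_lin (cs_lam sq).
Let aL_linl := act_linl aL_module.
Let aL_linr := act_linr aL_module.
Let aM_linl := act_linl aM_module.
Let h_bilin : bilin_map h. Proof. by case: (cs_h sq). Qed.
Let h_linl := h_bilin.1.
Let h_linr := h_bilin.2.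

Lemma h1l n : h 1 n = heps n *: 1.
Proof.
rewrite -(hopf_morph1 (cs_lam sq)) (proj1 (cs5 sq)) hD1; last by split=> *; linearity.
by rewrite hS1 (act_unit aL_module) (hopf_morph_eps nu_morph) mul1r.
Qed.

Lemma h1r m : h m 1 = heps m *: 1.
Proof.
rewrite -(hopf_morph1 (cs_lam' sq)) (proj2 (cs5 sq)) hD1; last by split=> *; linearity.
by rewrite hS1 mulr1 (act_unit aL_module) (hopf_morph_eps mu_morph).
Qed.

Lemma mu_lam_h_mulr m n :
  tsum (fun n1 n2 => mu (lam (h m n1)) * nu n2) (hD n) =
  tsum (fun m1 m2 => mu m1 * nu n * mu (hS m2)) (hD m).
Proof.
transitivity (tsum (fun n1 n2 =>
    tsum (fun m1 m2 => mu m1 * (mu (aM (nu n1) (hS m2)) * nu n2)) (hD m)) (hD n)).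
  apply: eq_tsum => n1 n2.
  rewrite (proj1 (cs4 sq)) (lin_map_tsum mu_lin) (lin_map_tsum (lin_map_mulr _)).
  by apply: eq_tsum => m1 m2; rewrite hopf_morphM // mulrA.
rewrite exchange_tsum; apply: eq_tsum => m1 m2.
rewrite -(lin_map_tsum (lin_map_mull _)) -mulrA; congr (_ * _).
rewrite -(equivariance_mulr (cs1_M sq)) (hopf_morph_hD nu_morph) //.
by split=> *; linearity.
Qed.

Lemma h_commutator m n :
  tsum (fun m1 m2 => tsum (fun n1 n2 => mu (lam (h m1 n1)) * nu n2 * mu m2) (hD n)) (hD m)
  = mu m * nu n.
Proof.
rewrite -(hD_conj_mulr_morph _ _ mu_lin (hopf_morph1 mu_morph) (hopf_morphM mu_morph)).
apply: eq_tsum => m1 m2.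
by rewrite -mu_lam_h_mulr (lin_map_tsum (lin_map_mulr _)).
Qed.

Lemma h_mul_act m n p l :
  h m n * aL p l =
  tsum (fun m1 m2 => tsum (fun n1 n2 =>
    aL (mu (lam (h m1 n1)) * p) l * h m2 n2) (hD n)) (hD m).
Proof.
rewrite -(peiffer_mulr (cs1_L sq)) (coalg_map2_hD _ _ (cs_h sq)); last first.
  by split=> *; linearity.
by apply: eq_tsum => m1 m2; apply: eq_tsum => n1 n2; rewrite actA.
Qed.

Lemma h_act_interchange m n l :
  tsum (fun m1 m2 => tsum (fun n1 n2 => aL (mu m1) (aL (nu n1) l) * h m2 n2) (hD n)) (hD m) =
  tsum (fun m1 m2 => tsum (fun n1 n2 => h m1 n1 * aL (nu n2) (aL (mu m2) l)) (hD n)) (hD m).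
Proof.
symmetry.
transitivity (tsum (fun m1 m2 => tsum (fun a1 a2 => tsum (fun n1 n2 => tsum (fun b1 b2 =>
    aL (mu (lam (h a1 b1)) * (nu n2 * mu m2)) l * h a2 b2) (hD n1)) (hD n)) (hD m1)) (hD m)).
  apply: eq_tsum => m1 m2; rewrite -exchange_tsum; apply: eq_tsum => n1 n2.
  by rewrite -actA // h_mul_act.
(* By cocommutativity, the legs of m and n feeding [h] can be moved last. *)
transitivity (tsum (fun p q => tsum (fun p1 p2 => tsum (fun r s => tsum (fun r1 r2 =>
    aL (mu (lam (h p1 r1)) * (nu r2 * mu p2)) l * h q s) (hD r)) (hD n)) (hD p)) (hD m)).
  rewrite hD_swap23; last by split=> *; linearity.
  apply: eq_tsum => p q; apply: eq_tsum => p1 p2.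
  by rewrite hD_swap23 //; split=> *; linearity.
apply: eq_tsum => p q; rewrite exchange_tsum; apply: eq_tsum => r s.
have aLh_lin : lin_map (fun w => aL w l * h q s) by linearity.
rewrite -actA // -h_commutator (lin_map_tsum aLh_lin); apply: eq_tsum => p1 p2.
by rewrite (lin_map_tsum aLh_lin); apply: eq_tsum => r1 r2; rewrite !mulrA.
Qed.

Lemma crossed_square_is_2action :
  is_2action aL aM aN (fun m l => aL (mu m) l) (fun n l => aL (nu n) l) h.
Proof.
split.
- exact: aL_module.
- exact: aM_module.
- by case: (cs1_N sq).
- exact: (module_hopf_pullback aL_module mu_morph).
- exact: (module_hopf_pullback aL_module nu_morph).
- exact: cs_h sq.
- split=> p x l.
  + exact: (pullback_act_equivariant (cs1_M sq) p x l aL_module).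
  + exact: (pullback_act_equivariant (cs1_N sq) p x l aL_module).
- exact: cs3 sq.
- exact: conj h1l h1r.
- exact: cs6 sq.
- exact: h_act_interchange.
Qed.

End CrossedSquares.

Theorem proposition2p5 (K : fieldType) :
  (forall X : xsquare K,
     is_2action (sactL X) (sactM X) (sactN X)
       (fun m l => sactL X (smu X m) l) (fun n l => sactL X (snu X n) l) (sh X))
  /\
  (forall (X Y : xsquare K) (alpha : sL X -> sL Y) (beta : sM X -> sM Y)
          (gamma : sN X -> sN Y) (delta : sP X -> sP Y),
     xsq_morph alpha beta gamma delta ->
     act2_morph (sactL X) (sactM X) (sactN X)
       (fun m l => sactL X (smu X m) l) (fun n l => sactL X (snu X n) l) (sh X)
       (sactL Y) (sactM Y) (sactN Y)
       (fun m l => sactL Y (smu Y m) l) (fun n l => sactL Y (snu Y n) l) (sh Y)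
       alpha beta gamma delta).
Proof.
split.
- move=> X; exact: (crossed_square_is_2action (sax X)).
- move=> X Y alpha beta gamma delta [? ? ? ? _ _ muE nuE actLE actME actNE hE].
  by split=> // [m l|n l]; rewrite actLE ?muE ?nuE.
Qed.
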